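(* Let $\Gamma$ be a finitely generated residually nilpotent group, let $F$ be a free group of rank $\mathrm{rk}(\Gamma)$ and write $\Gamma = F/K$. Let $G = F/N$ be a weakly para-$\Gamma$ group. (1) If there exists an automorphism $\phi: F\to F$ with $\phi(N) \geq K$ (i.e. $G$ is of Type I), then $G \cong \Gamma$. (2) If there exists an automorphism $\phi: F \to F$ with $\phi(N) \lneq K$ (i.e. $G$ is of Type II), then $G$ is not residually nilpotent; in particular $G$ is not a para-$\Gamma$ group.
   Context: The lower central series is $\gamma_1(G)=G$, $\gamma_k(G)=[G,\gamma_{k-1}(G)]$. A group is residually nilpotent if $\bigcap_k \gamma_k(G)=\{1\}$. $\mathrm{rk}(\Gamma)$ is the minimum size of a generating set of $\Gamma$. For a finitely generated residually nilpotent group $\Gamma$, a group $G$ is weakly para-$\Gamma$ if $G/\gamma_k(G)\cong \Gamma/\gamma_k(\Gamma)$ for all $k\geq 1$; it is para-$\Gamma$ if moreover $G$ is residually nilpotent. *)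

From mathcomp Require Import all_boot.
Set Implicit Arguments. Unset Strict Implicit. Unset Printing Implicit Defensive.

Record group := Group {
  carrier :> Type;
  gmul : carrier -> carrier -> carrier;
  ginv : carrier -> carrier;
  gone : carrier;
  gmulA : forall x y z, gmul x (gmul y z) = gmul (gmul x y) z;
  gmul1l : forall x, gmul gone x = x;
  gmulVl : forall x, gmul (ginv x) x = gone
}.
Arguments gmul {g}. Arguments ginv {g}. Arguments gone {g}.

Definition is_hom (G H : group) (f : G -> H) : Prop :=
  forall x y, f (gmul x y) = gmul (f x) (f y).
Definition surj (A B : Type) (f : A -> B) : Prop := forall b, exists a, f a = b.
Definition inj (A B : Type) (f : A -> B) : Prop := forall a a', f a = f a' -> a = a'.
Definition is_iso (G H : group) (f : G -> H) : Prop := is_hom f /\ inj f /\ surj f.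
Definition isomorphic (G H : group) : Prop := exists f : G -> H, is_iso f.

Definition is_subgroup (G : group) (P : G -> Prop) : Prop :=
  P gone /\ (forall x y, P x -> P y -> P (gmul x y)) /\ (forall x, P x -> P (ginv x)).
Definition gen (G : group) (S : G -> Prop) : G -> Prop :=
  fun x => forall P, is_subgroup P -> (forall y, S y -> P y) -> P x.
Definition comm (G : group) (x y : G) : G := gmul (ginv x) (gmul (ginv y) (gmul x y)).

(* lcs G n = gamma_{n+1}(G) *)
Arguments gen {G}.
Fixpoint lcs (G : group) (n : nat) : G -> Prop :=
  match n with
  | 0 => fun _ => True
  | S n' => gen (fun z => exists x y, @lcs G n' y /\ z = @comm G x y)
  end.
(* gamma G k = gamma_k(G) for k >= 1: gamma_1 = G, gamma_k = [G, gamma_{k-1}] *)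
Definition gamma (G : group) (k : nat) : G -> Prop := @lcs G k.-1.

Definition residually_nilpotent (G : group) : Prop :=
  forall x : G, (forall k, 1 <= k -> @gamma G k x) -> x = gone.

Definition generates (G : group) (n : nat) (s : 'I_n -> G) : Prop :=
  forall x, gen (fun y => exists i, y = s i) x.
Definition finitely_generated (G : group) : Prop :=
  exists n (s : 'I_n -> G), generates s.
Definition rank (G : group) (n : nat) : Prop :=
  (exists s : 'I_n -> G, generates s) /\
  (forall m (s : 'I_m -> G), generates s -> n <= m).

Definition free_basis (F : group) (n : nat) (b : 'I_n -> F) : Prop :=
  forall (H : group) (t : 'I_n -> H),
    exists f : F -> H, is_hom f /\ (forall i, f (b i) = t i) /\
      (forall g : F -> H, is_hom g -> (forall i, g (b i) = t i) -> forall x, g x = f x).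
Definition free_of_rank (F : group) (n : nat) : Prop := exists b : 'I_n -> F, free_basis b.

Definition kernel (G H : group) (f : G -> H) : G -> Prop := fun x => f x = gone.
Definition gimage (A B : Type) (f : A -> B) (P : A -> Prop) : B -> Prop :=
  fun y => exists x, P x /\ f x = y.

(* G/A ≅ H/B (A, B normal subgroups), written via a map on representatives:
   f induces a well-defined bijective homomorphism G/A -> H/B. *)
Definition quotient_iso (G : group) (A : G -> Prop) (H : group) (B : H -> Prop) : Prop :=
  exists f : G -> H,
    (forall x y, B (gmul (ginv (f (gmul x y))) (gmul (f x) (f y)))) /\
    (forall x, B (f x) <-> A x) /\
    (forall h, exists x, B (gmul (ginv (f x)) h)).

Definition weakly_para (G Gam : group) : Prop :=
  forall k, 1 <= k -> quotient_iso (@gamma G k) (@gamma Gam k).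
Definition para (G Gam : group) : Prop := weakly_para G Gam /\ residually_nilpotent G.

From HB Require Import structures.
From mathcomp Require Import all_boot all_algebra boolp.
Set Implicit Arguments. Unset Strict Implicit. Unset Printing Implicit Defensive.
Import GRing.Theory.

(* Both parts rest on a Hopfian property of a finitely generated group [P]: an
   endomorphism modulo [lcs c] that is onto modulo [lcs c] has no kernel modulo
   [lcs c].  Indeed it induces a surjective endomorphism of each abelian factor
   [lcs i / lcs i.+1], a finitely generated abelian group, and such endomorphisms are
   injective by the determinant trick.
   Type I: [K <= phi N] makes [G] a quotient of [Gam]; composed with an isomorphism
   [G / gamma_k ~ Gam / gamma_k] it gives such an endomorphism of [Gam], so the kernel
   of [Gam -> G] lies in every [gamma_k], hence is trivial.
   Type II: [phi N < K] makes [Gam] a quotient of [G] by a nontrivial kernel, which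
   the same argument (now with [G / gamma_k ~ Gam / gamma_k] inverted) puts in every
   [gamma_k G]. *)

Section PolyAction.
Local Open Scope ring_scope.
Variables (A : zmodType) (be : {additive A -> A}).

Definition poly_act (p : {poly int}) (x : A) := \sum_(k < size p) iter k be x *~ p`_k.

Lemma poly_actE n (p : {poly int}) x :
  (size p <= n)%N -> poly_act p x = \sum_(k < n) iter k be x *~ p`_k.
Proof.
move=> /subnKC <-; elim: (n - size p)%N => [|d IH]; first by rewrite addn0.
by rewrite addnS big_ord_recr /= -IH nth_default ?mulr0z ?addr0 // leq_addr.
Qed.

Lemma poly_actDl (p q : {poly int}) x : poly_act (p + q) x = poly_act p x + poly_act q x.
Proof.
set n := maxn (size p) (size q).
rewrite (@poly_actE n (p + q)) ?size_polyD // (@poly_actE n p) ?leq_maxl //.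
rewrite (@poly_actE n q) ?leq_maxr // -big_split /=.
by apply: eq_bigr => k _; rewrite coefD mulrzDr.
Qed.

Lemma poly_act0l x : poly_act 0 x = 0.
Proof. by rewrite /poly_act size_poly0 big_ord0. Qed.

Lemma poly_actNl (p : {poly int}) x : poly_act (- p) x = - poly_act p x.
Proof. by apply/eqP; rewrite -subr_eq0 opprK -poly_actDl addNr poly_act0l. Qed.

Lemma poly_actC (c : int) x : poly_act c%:P x = x *~ c.
Proof. by rewrite (@poly_actE 1) ?size_polyC ?leq_b1 // big_ord1 coefC. Qed.

Lemma poly_actMX (p : {poly int}) x : poly_act (p * 'X) x = poly_act p (be x).
Proof.
rewrite (@poly_actE (size p).+1); last first.
  by rewrite (leq_trans (size_polyMleq _ _)) ?size_polyX ?addn2.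
rewrite big_ord_recl coefMX /= mulr0z add0r /poly_act; apply: eq_bigr => k _.
by rewrite coefMX /= add0n -iterS iterSr.
Qed.

Lemma poly_act_is_zmod_morphism p : zmod_morphism (poly_act p).
Proof.
move=> x y; rewrite /poly_act -sumrB; apply: eq_bigr => k _.
rewrite -mulrzBl; congr (_ *~ _); elim: (k : nat) => //= n ->; exact: raddfB.
Qed.

HB.instance Definition _ p :=
  GRing.isZmodMorphism.Build A A (poly_act p) (poly_act_is_zmod_morphism p).

Lemma poly_act_comm (p : {poly int}) x : poly_act p (be x) = be (poly_act p x).
Proof.
rewrite /poly_act raddf_sum; apply: eq_bigr => k _.
by rewrite raddfMz -iterSr.
Qed.

Lemma poly_actCM (c : int) (p : {poly int}) x : poly_act (c%:P * p) x = poly_act p x *~ c.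
Proof.
rewrite (@poly_actE (size p)); last first.
  apply: leq_trans (size_polyMleq _ _) _; rewrite size_polyC.
  by case: (c != 0); rewrite ?add0n ?add1n ?leq_pred.
rewrite /poly_act mulrz_suml; apply: eq_bigr => k _; by rewrite coefCM mulrC mulrzA.
Qed.

Lemma poly_actM (p q : {poly int}) x : poly_act (p * q) x = poly_act p (poly_act q x).
Proof.
elim/poly_ind: p x => [|p c IH] x; first by rewrite mul0r !poly_act0l.
rewrite mulrDl mulrAC poly_actDl poly_actMX IH poly_actCM.
by rewrite poly_actDl poly_actMX poly_actC poly_act_comm.
Qed.

Lemma poly_act_suml (I : finType) (F : I -> {poly int}) x :
  poly_act (\sum_i F i) x = \sum_i poly_act (F i) x.
Proof. exact: (big_morph (poly_act^~ x) (fun p q => poly_actDl p q x) (poly_act0l x)). Qed.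

(* Surjective endomorphisms of finitely generated abelian groups are injective:
   writing [t a = \sum_b be (t b) *~ C a b], the matrix [1 - C 'X] over [{poly int}]
   kills the generators, hence so does its determinant [d]; as [d`_0 = 1], the
   relation [d(be) = 0] expresses the identity as a multiple of [be]. *)
Lemma fingen_surj_additive_inj_ord m (t : 'I_m -> A) :
  (forall x, exists c : 'I_m -> int, x = \sum_i t i *~ c i) ->
  (forall y, exists x, be x = y) -> forall x, be x = 0 -> x = 0.
Proof.
move=> gen sur.
have : forall a, exists c : 'I_m -> int, t a = \sum_b be (t b) *~ c b.
  move=> a; have [u <-] := sur (t a); have [c ->] := gen u.
  by exists c; rewrite raddf_sum; apply: eq_bigr => b _; rewrite raddfMz.
case/fin_all_exists => C hC.
pose M : 'M[{poly int}]_m := \matrix_(a, b) ((a == b)%:R - (C a b)%:P * 'X).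
have M_kills : forall a, \sum_b poly_act (M a b) (t b) = 0.
  move=> a.
  rewrite (eq_bigr (fun b => poly_act ((a == b)%:R) (t b) - be (t b) *~ C a b));
    last by move=> b _; rewrite mxE poly_actDl poly_actNl poly_actMX poly_actC.
  rewrite sumrB -(hC a) (bigD1 a) //= eqxx -polyC1 poly_actC mulr1z big1 ?addr0 ?subrr //.
  by move=> b /negbTE; rewrite eq_sym => ->; rewrite poly_act0l.
set d := \det M.
have d_kills_gen : forall c, poly_act d (t c) = 0.
  move=> c; have := congr1 (fun N : 'M[{poly int}]_m => \sum_b poly_act (N c b) (t b))
    (mul_adj_mx M).
  have -> : \sum_b poly_act ((\det M)%:M c b) (t b) = poly_act d (t c).
    rewrite (bigD1 c) //= mxE eqxx mulr1n big1 ?addr0 // => b.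
    by move/negbTE; rewrite mxE eq_sym => ->; rewrite mulr0n poly_act0l.
  move<-; rewrite (eq_bigr (fun b => \sum_a poly_act (\adj M c a)
      (poly_act (M a b) (t b)))); last first.
    by move=> b _; rewrite mxE poly_act_suml; apply: eq_bigr => a _; rewrite poly_actM.
  by rewrite exchange_big /= big1 // => a _; rewrite -raddf_sum M_kills raddf0.
have d0 : d`_0 = 1.
  rewrite -horner_coef0 -/(horner_eval 0 d) /d -det_map_mx.
  rewrite (_ : map_mx _ M = 1%:M) ?det1 //; apply/matrixP => a b.
  rewrite !mxE rmorphB rmorphM /= !horner_evalE hornerX mulr0 subr0.
  by case: (a == b); rewrite ?hornerC ?horner1 ?horner0.
have d_kills : forall x, poly_act d x = 0.
  move=> x; have [c ->] := gen x.
  by rewrite raddf_sum big1 // => b _; rewrite raddfMz /= d_kills_gen mul0rz.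
move=> x bx; rewrite -(d_kills x) -(poly_take_drop 1 d) poly_actDl expr1 poly_actMX bx.
rewrite raddf0 addr0 (@poly_actE 1) ?size_take_poly // big_ord1 /=.
by rewrite coef_take_poly /= d0 mulr1z.
Qed.

Lemma fingen_surj_additive_inj (I : finType) (t : I -> A) :
  (forall x, exists c : I -> int, x = \sum_i t i *~ c i) ->
  (forall y, exists x, be x = y) -> forall x, be x = 0 -> x = 0.
Proof.
move=> gen; apply: (@fingen_surj_additive_inj_ord #|I| (t \o enum_val)) => x.
have [c ->] := gen x; exists (c \o enum_val).
exact: (big_enum_val (R := A) (op := +%R) (idx := 0) (A := I) (fun i => t i *~ c i)).
Qed.

End PolyAction.

Section GroupLaws.
Variable P : group.
Implicit Types x y z : P.

Lemma gmulgV x : gmul x (ginv x) = gone.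
Proof.
rewrite -[LHS]gmul1l -{1}(gmulVl (ginv x)) -gmulA (gmulA (ginv x)) gmulVl gmul1l.
by rewrite gmulVl.
Qed.

Lemma gmulg1 x : gmul x gone = x.
Proof. by rewrite -(gmulVl x) gmulA gmulgV gmul1l. Qed.

Lemma gmulKg x y : gmul (ginv x) (gmul x y) = y.
Proof. by rewrite gmulA gmulVl gmul1l. Qed.

Lemma gmulKVg x y : gmul x (gmul (ginv x) y) = y.
Proof. by rewrite gmulA gmulgV gmul1l. Qed.

Lemma ginv_uniq x y : gmul x y = gone -> y = ginv x.
Proof. by move=> h; rewrite -(gmulKg x y) h gmulg1. Qed.

Lemma ginvK x : ginv (ginv x) = x.
Proof. by symmetry; apply: ginv_uniq; rewrite gmulVl. Qed.

Lemma ginvM x y : ginv (gmul x y) = gmul (ginv y) (ginv x).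
Proof. by symmetry; apply: ginv_uniq; rewrite -gmulA gmulKVg gmulgV. Qed.

Lemma ginv1 : ginv (gone : P) = gone.
Proof. by symmetry; apply: ginv_uniq; rewrite gmulg1. Qed.

Lemma gmulI x y z : gmul x y = gmul x z -> y = z.
Proof. by move=> h; rewrite -(gmulKg x y) h gmulKg. Qed.

Lemma eq_gmulVg1 x y : gmul (ginv x) y = gone -> x = y.
Proof. by move/ginv_uniq; rewrite ginvK. Qed.

End GroupLaws.

Ltac gnorm := repeat rewrite ?ginvM ?ginvK ?ginv1 -?gmulA ?gmulKg ?gmulKVg ?gmulgV
  ?gmulVl ?gmul1l ?gmulg1.

Definition conjg (P : group) (g x : P) := gmul (ginv g) (gmul x g).
Definition normal (P : group) (N : P -> Prop) :=
  is_subgroup N /\ forall x g, N x -> N (conjg g x).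
Definition cong (P : group) (N : P -> Prop) (x y : P) := N (gmul (ginv x) y).

Section Subgroups.
Variable P : group.
Implicit Types (x y z : P) (S Q : P -> Prop).

Lemma subgroup1 Q : is_subgroup Q -> Q gone.
Proof. by case. Qed.

Lemma subgroupM Q : is_subgroup Q -> forall x y, Q x -> Q y -> Q (gmul x y).
Proof. by case=> _ []. Qed.

Lemma subgroupV Q : is_subgroup Q -> forall x, Q x -> Q (ginv x).
Proof. by case=> _ []. Qed.

Lemma gen_subgroup S : is_subgroup (gen S).
Proof.
split; first by move=> Q /subgroup1.
split=> [x y hx hy | x hx] Q hQ hS.
  by apply: (subgroupM hQ); [exact: hx | exact: hy].
by apply: (subgroupV hQ); exact: hx.
Qed.

Lemma mem_gen S x : S x -> gen S x.
Proof. by move=> h Q _ hS; apply: hS. Qed.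

Lemma gen_min S Q : is_subgroup Q -> (forall y, S y -> Q y) -> forall x, gen S x -> Q x.
Proof. by move=> hQ hS x hx; apply: hx. Qed.

Lemma lcs_subgroup n : is_subgroup (@lcs P n).
Proof. by case: n => [|n]; [split | exact: gen_subgroup]. Qed.

Lemma lcs1 n : @lcs P n gone.
Proof. exact: subgroup1 (lcs_subgroup n). Qed.

Lemma lcsM n x y : lcs n x -> lcs n y -> lcs n (gmul x y).
Proof. exact: (subgroupM (lcs_subgroup n)). Qed.

Lemma lcsV n x : lcs n x -> lcs n (ginv x).
Proof. exact: (subgroupV (lcs_subgroup n)). Qed.

Lemma lcs_conjg n x g : lcs n x -> lcs n (conjg g x).
Proof.
elim: n x g => [|n IH] x g //= hx.
set S := fun z => exists x0 y, lcs n y /\ z = comm x0 y.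
have sS := gen_subgroup S.
apply: (gen_min (Q := fun x => forall g, gen S (conjg g x))) hx g.
- split; first by move=> g; rewrite /conjg; gnorm; exact: subgroup1 sS.
  split=> [a b ha hb | a ha] g.
    have -> : conjg g (gmul a b) = gmul (conjg g a) (conjg g b) by rewrite /conjg; gnorm.
    exact: subgroupM sS _ _ (ha g) (hb g).
  have -> : conjg g (ginv a) = ginv (conjg g a) by rewrite /conjg; gnorm.
  exact: subgroupV sS _ (ha g).
- move=> y [a [b [hb ->]]] g; apply: mem_gen; exists (conjg g a), (conjg g b).
  by split; [exact: IH | rewrite /conjg /comm; gnorm].
Qed.

Lemma lcs_normal n : normal (@lcs P n).
Proof. by split; [exact: lcs_subgroup | move=> x g; exact: lcs_conjg]. Qed.

Lemma lcs_commr n x y : lcs n y -> @lcs P n.+1 (comm x y).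
Proof. by move=> h; apply: mem_gen; exists x, y. Qed.

Lemma lcs_comml n x y : lcs n x -> @lcs P n.+1 (comm x y).
Proof.
move=> h; have -> : comm x y = ginv (comm y x) by rewrite /comm; gnorm.
by apply: lcsV; exact: lcs_commr.
Qed.

Lemma lcsS n x : @lcs P n.+1 x -> lcs n x.
Proof.
apply: gen_min; first exact: lcs_subgroup.
move=> y [a [b [hb ->]]].
have -> : comm a b = gmul (conjg a (ginv b)) b by rewrite /comm /conjg; gnorm.
by apply: lcsM => //; apply: lcs_conjg; exact: lcsV.
Qed.

Lemma lcs_leq m n x : m <= n -> @lcs P n x -> lcs m x.
Proof.
move=> /subnKC <-; elim: (n - m) x => [|d IH] x; first by rewrite addn0.
by rewrite addnS => /lcsS /IH.
Qed.

End Subgroups.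

Arguments lcs_subgroup {P} n.
Arguments lcs_normal {P} n.

Section Congruence.
Variables (P : group) (N : P -> Prop).
Hypothesis nN : normal N.
Implicit Types x y z : P.
Let sN : is_subgroup N := nN.1.

Lemma cong_refl x : cong N x x.
Proof. by rewrite /cong gmulVl; exact: subgroup1. Qed.

Lemma cong_sym x y : cong N x y -> cong N y x.
Proof. by rewrite /cong => /(subgroupV sN); rewrite ginvM ginvK. Qed.

Lemma cong_trans x y z : cong N x y -> cong N y z -> cong N x z.
Proof. by rewrite /cong => h1 h2; have := subgroupM sN h1 h2; rewrite -gmulA gmulKVg. Qed.

Lemma congM x x' y y' : cong N x x' -> cong N y y' -> cong N (gmul x y) (gmul x' y').
Proof.
rewrite /cong => h1 h2.
have -> : gmul (ginv (gmul x y)) (gmul x' y') =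
  gmul (conjg y (gmul (ginv x) x')) (gmul (ginv y) y') by rewrite /conjg; gnorm.
by apply: (subgroupM sN) => //; exact: nN.2.
Qed.

Lemma congV x x' : cong N x x' -> cong N (ginv x) (ginv x').
Proof.
rewrite /cong => h.
have -> : gmul (ginv (ginv x)) (ginv x') = conjg (ginv x) (ginv (gmul (ginv x) x'))
  by rewrite /conjg; gnorm.
by apply: nN.2; exact: subgroupV.
Qed.

Lemma congR x x' y y' : cong N x x' -> cong N y y' -> cong N (comm x y) (comm x' y').
Proof. by move=> h1 h2; do 2![apply: congM; first exact: congV]; exact: congM. Qed.

Lemma cong1r x : cong N x gone <-> N x.
Proof.
rewrite /cong; split=> [/(subgroupV sN) | /(subgroupV sN)]; rewrite ?gmulg1 ?ginvK //.
Qed.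

Lemma cong_mem (M : P -> Prop) x y :
  is_subgroup M -> (forall z, N z -> M z) -> cong N x y -> M x -> M y.
Proof.
move=> sM NM h hx; have -> : y = gmul x (gmul (ginv x) y) by gnorm.
by apply: (subgroupM sM) => //; exact: NM.
Qed.

Lemma cong_memE x y : cong N x y -> N x <-> N y.
Proof.
move=> h; split; first exact: (cong_mem sN (fun _ => id) h).
exact: (cong_mem sN (fun _ => id) (cong_sym h)).
Qed.

End Congruence.

Definition hom_mod (P Q : group) (N : Q -> Prop) (f : P -> Q) :=
  forall x y, cong N (f (gmul x y)) (gmul (f x) (f y)).

Section HomMod.
Variables (P Q : group) (N : Q -> Prop) (f : P -> Q).
Hypotheses (nN : normal N) (hf : hom_mod N f).

Lemma hom_mod1 : cong N (f gone) gone.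
Proof. by apply/(cong1r nN); have := hf gone gone; rewrite gmul1l /cong gmulKg. Qed.

Lemma hom_modV x : cong N (f (ginv x)) (ginv (f x)).
Proof.
have h1 : cong N gone (gmul (f (ginv x)) (f x)).
  have := hf (ginv x) x; rewrite gmulVl; apply: (cong_trans nN).
  exact: (cong_sym nN hom_mod1).
have := congM nN h1 (cong_refl nN (ginv (f x))).
by rewrite gmul1l -gmulA gmulgV gmulg1; exact: (cong_sym nN).
Qed.

Lemma hom_modR x y : cong N (f (comm x y)) (comm (f x) (f y)).
Proof.
rewrite /comm; do 2![apply: (cong_trans nN (hf _ _)); apply: (congM nN); first exact: hom_modV].
exact: hf.
Qed.

Lemma hom_mod_lcs i : (forall z, N z -> lcs i z) -> forall x, lcs i x -> lcs i (f x).
Proof.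
elim: i => [|i IH] // Ni.
have Ni' : forall z, N z -> lcs i z by move=> z /Ni /lcsS.
have fcong := cong_mem (lcs_subgroup _) Ni.
apply: gen_min.
- split; first exact: (fcong _ _ (cong_sym nN hom_mod1) (lcs1 _ _)).
  split=> [a b ha hb | a ha].
    exact: (fcong _ _ (cong_sym nN (hf a b)) (lcsM ha hb)).
  exact: (fcong _ _ (cong_sym nN (hom_modV a)) (lcsV ha)).
- move=> y [a [b [hb ->]]]; apply: (fcong _ _ (cong_sym nN (hom_modR a b))).
  by apply: lcs_commr; exact: IH.
Qed.

Lemma hom_modB x y : cong N (f (gmul x (ginv y))) (gmul (f x) (ginv (f y))).
Proof.
by apply: (cong_trans nN (hf _ _)); apply: (congM nN (cong_refl nN _)); exact: hom_modV.
Qed.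

End HomMod.

Definition fingen_mod (P : group) (A B : P -> Prop) : Prop :=
  exists (J : finType) (t : J -> P), (forall j, A (t j)) /\
    forall y, A y -> gen (fun z => (exists j, z = t j) \/ B z) y.

Section LowerCentralFactor.
Local Open Scope ring_scope.
Variables (P : group) (i : nat).
Let nN := lcs_normal (P := P) i.+1.

Record lcfactor := LCFactor {
  lcf_set : P -> Prop;
  lcf_setP : exists x, lcs i x /\ lcf_set = cong (lcs i.+1) x }.
HB.instance Definition _ := gen_eqMixin lcfactor.
HB.instance Definition _ := gen_choiceMixin lcfactor.

Lemma lcf_set_inj (a b : lcfactor) : lcf_set a = lcf_set b -> a = b.
Proof.
by case: a b => [s1 p1] [s2 p2] /= e; subst s2; congr LCFactor; exact: Prop_irrelevance.
Qed.

(* Elements outside [lcs i] are sent to the class of [gone]. *)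
Definition lcs_pick (x : P) : P := if pselect (lcs i x) then x else gone.

Lemma lcs_pickP x : lcs i (lcs_pick x).
Proof. by rewrite /lcs_pick; destruct (pselect (lcs i x)) => //; exact: lcs1. Qed.

Lemma lcs_pickE x : lcs i x -> lcs_pick x = x.
Proof. by rewrite /lcs_pick; destruct (pselect (lcs i x)). Qed.

Definition cls (x : P) : lcfactor :=
  LCFactor (ex_intro _ (lcs_pick x) (conj (lcs_pickP x) erefl)).

Lemma cls_eq (x y : P) : lcs i x -> lcs i y -> (cls x = cls y <-> cong (lcs i.+1) x y).
Proof.
move=> hx hy; split.
  by move/(congr1 lcf_set) => /=; rewrite !lcs_pickE // => ->; exact: cong_refl.
move=> h; apply: lcf_set_inj => /=; rewrite !lcs_pickE //.
apply: funext => z; apply: propext; split; first exact: (cong_trans nN (cong_sym nN h)).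
exact: (cong_trans nN h).
Qed.

Lemma clsP (a : lcfactor) : exists x, lcs i x /\ a = cls x.
Proof.
by case: a => s [x [hx e]]; exists x; split => //; apply: lcf_set_inj; rewrite /= lcs_pickE.
Qed.

Definition rep (a : lcfactor) : P := proj1_sig (cid (clsP a)).

Lemma repP a : lcs i (rep a).
Proof. by rewrite /rep; case: cid => x []. Qed.

Lemma repK a : cls (rep a) = a.
Proof. by rewrite /rep; case: cid => x []. Qed.

Lemma rep_cong x : lcs i x -> cong (lcs i.+1) (rep (cls x)) x.
Proof. by move=> hx; apply/(cls_eq (repP _) hx); exact: repK. Qed.

Definition lcf_zero := cls gone.
Definition lcf_opp a := cls (ginv (rep a)).
Definition lcf_add a b := cls (gmul (rep a) (rep b)).

Lemma lcf_addE x y : lcs i x -> lcs i y -> lcf_add (cls x) (cls y) = cls (gmul x y).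
Proof.
move=> hx hy; apply/cls_eq; [exact: (lcsM (repP _) (repP _)) | exact: lcsM |].
by apply: (congM nN); exact: rep_cong.
Qed.

Lemma lcf_oppE x : lcs i x -> lcf_opp (cls x) = cls (ginv x).
Proof.
move=> hx; apply/cls_eq; [exact: (lcsV (repP _)) | exact: lcsV |].
by apply: (congV nN); exact: rep_cong.
Qed.

Lemma lcf_addA : associative lcf_add.
Proof.
move=> a b c; have [x [hx ->]] := clsP a; have [y [hy ->]] := clsP b.
by have [z [hz ->]] := clsP c; rewrite !lcf_addE ?gmulA //; exact: lcsM.
Qed.

Lemma lcf_addC : commutative lcf_add.
Proof.
move=> a b; have [x [hx ->]] := clsP a; have [y [hy ->]] := clsP b.
rewrite !lcf_addE //; apply/cls_eq; try exact: lcsM.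
rewrite /cong (_ : gmul _ _ = comm y x); first exact: lcs_commr.
by rewrite /comm; gnorm.
Qed.

Lemma lcf_add0 : left_id lcf_zero lcf_add.
Proof. by move=> a; have [x [hx ->]] := clsP a; rewrite lcf_addE ?gmul1l //; exact: lcs1. Qed.

Lemma lcf_addN : left_inverse lcf_zero lcf_opp lcf_add.
Proof.
by move=> a; have [x [hx ->]] := clsP a; rewrite lcf_oppE // lcf_addE ?gmulVl //; exact: lcsV.
Qed.

HB.instance Definition _ :=
  GRing.isZmodule.Build lcfactor lcf_addA lcf_addC lcf_add0 lcf_addN.

Lemma clsM x y : lcs i x -> lcs i y -> cls (gmul x y) = cls x + cls y.
Proof. by move=> hx hy; rewrite -lcf_addE. Qed.

Lemma clsV x : lcs i x -> cls (ginv x) = - cls x.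
Proof. by move=> hx; rewrite -lcf_oppE. Qed.

Lemma cls_eq0 x : lcs i x -> (cls x = 0 <-> lcs i.+1 x).
Proof.
move=> hx; rewrite -(cong1r nN); exact: (cls_eq hx (lcs1 _ _)).
Qed.

Lemma lcfactor_fingen : fingen_mod (@lcs P i) (lcs i.+1) ->
  exists (J : finType) (t : J -> lcfactor),
    forall v, exists c : J -> int, v = \sum_j t j *~ c j.
Proof.
case=> J [t [ti tgen]]; exists J, (cls \o t) => v.
have [y [hy ->]] := clsP v.
pose Q y := lcs i y /\ exists c : J -> int, cls y = \sum_j cls (t j) *~ c j.
have Q1 : forall z, lcs i.+1 z -> Q z.
  move=> z hz; split; first exact: lcsS.
  exists (fun _ => 0); rewrite big1 => [|j _]; last by rewrite mulr0z.
  by apply/cls_eq0 => //; exact: lcsS.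
suff [] : Q y by [].
apply: (gen_min (Q := Q)) (tgen y hy).
- split; first exact: (Q1 _ (lcs1 _ _)).
  split=> [a b [ha [ca ea]] [hb [cb eb]] | a [ha [ca ea]]].
    split; first exact: lcsM.
    exists (fun j => ca j + cb j); rewrite clsM // ea eb -big_split /=.
    by apply: eq_bigr => j _; rewrite mulrzDr.
  split; first exact: lcsV.
  exists (fun j => - ca j); rewrite clsV // ea -sumrN.
  by apply: eq_bigr => j _; rewrite mulrNz.
- move=> z [[j ->] | hz]; last exact: Q1.
  split; first exact: ti.
  exists (fun k => (k == j)%:Z); rewrite (bigD1 j) //= eqxx mulr1z big1 ?addr0 // => k.
  by move/negbTE => ->; rewrite mulr0z.
Qed.

End LowerCentralFactor.

Arguments cls {P} i x.

Lemma congR_lcs (P : group) k (a a' b b' : P) :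
  cong (lcs k.+1) a a' -> cong (lcs k) b b' -> cong (lcs k.+1) (comm a b) (comm a' b').
Proof.
move=> h1 h2; have nK := lcs_normal (P := P) k.+1.
apply: (cong_trans nK (congR nK h1 (cong_refl nK b))).
rewrite -(gmulKVg b b'); move: h2; rewrite /cong; set z := gmul (ginv b) b' => hz.
have -> : comm a' (gmul b z) = gmul (comm a' z) (gmul (comm a' b) (comm (comm a' b) z))
  by rewrite /comm; gnorm.
apply: (cong_sym nK).
have e1 : cong (lcs k.+1) (comm a' z) gone by apply/(cong1r nK); exact: lcs_commr.
have e2 : cong (lcs k.+1) (comm (comm a' b) z) gone by apply/(cong1r nK); exact: lcs_commr.
by have := congM nK e1 (congM nK (cong_refl nK (comm a' b)) e2); rewrite gmulg1 gmul1l.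
Qed.

Section CommutatorGen.
Variables (P : group) (k : nat) (U : P -> Prop).
Hypotheses (sU : is_subgroup U) (lcsU : forall z, @lcs P k.+2 z -> U z).

Lemma gen_comml (S : P -> Prop) t : lcs k t ->
  (forall x, S x -> U (comm x t)) -> forall x, gen S x -> U (comm x t).
Proof.
move=> ht St; apply: (gen_min (Q := fun x => U (comm x t))) => //.
split; first by rewrite /comm; gnorm; exact: subgroup1.
split=> [a b ha hb | a ha].
  have -> : comm (gmul a b) t =
      gmul (comm a t) (gmul (comm (comm a t) b) (comm b t)) by rewrite /comm; gnorm.
  apply: (subgroupM sU ha); apply: (subgroupM sU _ hb).
  by apply: lcsU; apply: lcs_comml; exact: lcs_commr.
have -> : comm (ginv a) t =
    gmul (ginv (comm a t)) (comm (ginv (comm a t)) (ginv a)) by rewrite /comm; gnorm.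
apply: (subgroupM sU (subgroupV sU ha)).
by apply: lcsU; apply: lcs_comml; apply: lcsV; exact: lcs_commr.
Qed.

Lemma gen_commr (S : P -> Prop) : (forall y, S y -> lcs k y) ->
  (forall x y, S y -> U (comm x y)) -> forall x y, gen S y -> U (comm x y).
Proof.
move=> Sk SU x y hy; suff [_] : lcs k y /\ forall x, U (comm x y) by [].
apply: (gen_min (Q := fun y => lcs k y /\ forall x, U (comm x y))) hy; last first.
  by move=> z hz; split; [exact: Sk | move=> x'; exact: SU].
split; first by split=> [|x']; [exact: lcs1 | rewrite /comm; gnorm; exact: subgroup1].
split=> [a b [ha Ua] [hb Ub] | a [ha Ua]].
  split=> [|x']; first exact: lcsM.
  have -> : comm x' (gmul a b) =
      gmul (comm x' b) (gmul (comm x' a) (comm (comm x' a) b)) by rewrite /comm; gnorm.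
  apply: (subgroupM sU (Ub x')); apply: (subgroupM sU (Ua x')).
  by apply: lcsU; apply: lcs_comml; exact: lcs_commr.
split=> [|x']; first exact: lcsV.
have -> : comm x' (ginv a) =
    gmul (ginv (comm x' a)) (comm (ginv (comm x' a)) (ginv a)) by rewrite /comm; gnorm.
apply: (subgroupM sU (subgroupV sU (Ua x'))).
by apply: lcsU; apply: lcs_comml; apply: lcsV; exact: lcs_commr.
Qed.

End CommutatorGen.

(* If [s] generates [P] and [t] generates [lcs k] modulo [lcs k.+1], then the
   commutators [comm (s a) (t j)] generate [lcs k.+1] modulo [lcs k.+2]. *)
Lemma lcs_fingen_mod (P : group) (I : finType) (s : I -> P) :
  (forall x, gen (fun y => exists a, y = s a) x) ->
  forall k, fingen_mod (@lcs P k) (lcs k.+1).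
Proof.
move=> gens; elim=> [|k [J [t [tk tgen]]]].
  exists I, s; split=> // y _; apply: (gen_min (gen_subgroup _)) (gens y).
  by move=> z [a ->]; apply: mem_gen; left; exists a.
pose t' p := comm (s p.1) (t p.2 : P).
exists (I * J)%type, t'; split=> [p|]; first exact: lcs_commr.
set U := gen (fun z => (exists p, z = t' p) \/ lcs k.+2 z).
have sU : is_subgroup U := gen_subgroup _.
have lcsU : forall z, lcs k.+2 z -> U z by move=> z hz; apply: mem_gen; right.
have commt : forall j x, U (comm x (t j)).
  move=> j x; apply: (gen_comml sU lcsU (tk j) _ (gens x)) => z [a ->].
  by apply: mem_gen; left; exists (a, j).
have commU : forall x y, lcs k y -> U (comm x y).
  move=> x y hy; apply: (@gen_commr P k U sU lcsU _ _ _ x y (tgen y hy)).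
    by move=> z [[j ->] | hz]; [exact: tk | exact: lcsS].
  by move=> x' z [[j ->] | hz]; [exact: commt | apply: lcsU; exact: lcs_commr].
by move=> y; apply: (gen_min sU) => z [x [y0 [hy0 ->]]]; exact: commU.
Qed.

Section Hopfian.
Variables (P : group) (I : finType) (s : I -> P).
Hypothesis gens : forall x, gen (fun y => exists a, y = s a) x.
Variables (c : nat) (al : P -> P).
Hypotheses (hal : hom_mod (lcs c) al) (sal : forall y, exists x, cong (lcs c) (al x) y).
Let nC := lcs_normal (P := P) c.

Lemma endo_lcs i : i <= c -> forall x, lcs i x -> lcs i (al x).
Proof. by move=> hi; apply: (hom_mod_lcs nC hal) => z; exact: lcs_leq. Qed.

Lemma endo_cong j x y : j <= c -> cong (lcs j) x y -> cong (lcs j) (al x) (al y).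
Proof.
move=> hj; rewrite -(gmulKVg x y) {1}/cong gmulKg; set w := gmul (ginv x) y => hw.
have nJ := lcs_normal (P := P) j.
apply: (cong_trans nJ _ (cong_sym nJ (lcs_leq hj (hal x w)))).
by rewrite /cong gmulKg; exact: endo_lcs.
Qed.

Lemma endo_onto_lcs i : i < c ->
  forall y, lcs i y -> exists x, lcs i x /\ cong (lcs i.+1) (al x) y.
Proof.
elim: i => [|i IH] hi y hy.
  by have [x hx] := sal y; exists x; split=> //; exact: (lcs_leq hi).
have nI := lcs_normal (P := P) i.+2.
apply: (gen_min (Q := fun y => exists x, lcs i.+1 x /\ cong (lcs i.+2) (al x) y)) hy.
  split; first by exists gone; split; [exact: lcs1 | exact: (lcs_leq hi (hom_mod1 nC hal))].
  split=> [a b [xa [ha ca]] [xb [hb cb]] | a [xa [ha ca]]].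
    exists (gmul xa xb); split; first exact: lcsM.
    exact: (cong_trans nI (lcs_leq hi (hal xa xb)) (congM nI ca cb)).
  exists (ginv xa); split; first exact: lcsV.
  exact: (cong_trans nI (lcs_leq hi (hom_modV nC hal xa)) (congV nI ca)).
move=> z [a [b [hb ->]]].
have [b' [hb' cb]] := IH (ltnW hi) b hb.
have [a' ca] := sal a.
exists (comm a' b'); split; first exact: lcs_commr.
apply: (cong_trans nI (lcs_leq hi (hom_modR nC hal a' b'))).
by apply: congR_lcs => //; exact: (lcs_leq hi).
Qed.

(* On the abelian factor [lcs i / lcs i.+1], [al] induces a surjective
   endomorphism, which is injective by [fingen_surj_additive_inj]. *)
Lemma endo_lcf_inj i : i < c -> forall x, lcs i x -> lcs i.+1 (al x) -> lcs i.+1 x.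
Proof.
move=> hi x hx hax; have hi' := ltnW hi.
pose be (v : lcfactor P i) := cls i (al (rep v)).
have beE : forall y, lcs i y -> be (cls i y) = cls i (al y).
  move=> y hy; apply/cls_eq; [exact: (endo_lcs hi' (repP _)) | exact: endo_lcs |].
  exact: (endo_cong hi (rep_cong hy)).
have beB : zmod_morphism be.
  move=> u v; have [a [ha ->]] := clsP u; have [b [hb ->]] := clsP v.
  have alab := endo_lcs hi' ha; have albb := endo_lcs hi' hb.
  rewrite (beE _ ha) (beE _ hb) -(clsV albb) -(clsM alab (lcsV albb)).
  rewrite -(clsV hb) -(clsM ha (lcsV hb)) beE; last exact: (lcsM ha (lcsV hb)).
  apply/cls_eq; [exact: (endo_lcs hi' (lcsM ha (lcsV hb))) | exact: (lcsM alab (lcsV albb)) |].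
  exact: (lcs_leq hi (hom_modB nC hal a b)).
pose bea : {additive lcfactor P i -> lcfactor P i} :=
  HB.pack be (GRing.isZmodMorphism.Build _ _ be beB).
have be_onto : forall v, exists u, bea u = v.
  move=> v; have [y [hy ->]] := clsP v; have [x' [hx' cx]] := endo_onto_lcs hi hy.
  by exists (cls i x'); rewrite /= beE //; apply/cls_eq => //; exact: endo_lcs.
have [J [t tgen]] := lcfactor_fingen (lcs_fingen_mod gens i).
have bex0 : bea (cls i x) = 0%R by rewrite /= beE //; apply/cls_eq0 => //; exact: endo_lcs.
by apply/(cls_eq0 hx); exact: (fingen_surj_additive_inj tgen be_onto bex0).
Qed.

Lemma hopfian_lcs x : lcs c (al x) -> lcs c x.
Proof.
move=> hax; suff : forall i, i <= c -> lcs i x by apply.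
elim=> [|i IH] hi //; apply: endo_lcf_inj => //; first exact: IH (ltnW hi).
exact: (lcs_leq hi hax).
Qed.

End Hopfian.

Section Homomorphisms.
Variables (P Q : group) (f : P -> Q).
Hypothesis hf : is_hom f.

Lemma hom1 : f gone = gone.
Proof. by apply: (@gmulI _ (f gone)); rewrite -hf !gmulg1. Qed.

Lemma homV x : f (ginv x) = ginv (f x).
Proof. by apply: ginv_uniq; rewrite -hf gmulgV hom1. Qed.

Lemma hom_cong c a b : cong (lcs c) a b -> cong (lcs c) (f a) (f b).
Proof.
rewrite /cong -homV -hf; apply: (hom_mod_lcs (lcs_normal c)) => // x y.
by rewrite hf; exact: (cong_refl (lcs_normal c)).
Qed.

Lemma hom_ker_inj : (forall x, f x = gone -> x = gone) -> inj f.
Proof.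
move=> ker1 a b e; apply: eq_gmulVg1; apply: ker1.
by rewrite hf homV e gmulVl.
Qed.

End Homomorphisms.

Lemma iso_inv (P Q : group) (f : P -> Q) : is_iso f ->
  exists g : Q -> P, is_iso g /\ (forall x, g (f x) = x) /\ (forall y, f (g y) = y).
Proof.
case=> hf [fi fs]; exists (fun y => proj1_sig (cid (fs y))).
have fgK : forall y, f (proj1_sig (cid (fs y))) = y by move=> y; case: cid.
have gfK : forall x, proj1_sig (cid (fs (f x))) = x by move=> x; apply: fi; rewrite fgK.
split=> //; split; first by move=> x y; apply: fi; rewrite hf !fgK.
by split=> [x y e | x]; [rewrite -[x]fgK -[y]fgK e | exists (f x)].
Qed.

Lemma hom_factor (F A B : group) (p : F -> A) (q : F -> B) :
  is_hom p -> surj p -> is_hom q -> surj q -> (forall x, kernel p x -> kernel q x) ->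
  exists h : A -> B, is_hom h /\ surj h /\ forall x, h (p x) = q x.
Proof.
move=> hp sp hq sq pq; pose r a := proj1_sig (cid (sp a)).
have prK : forall a, p (r a) = a by move=> a; rewrite /r; case: cid.
have pq_eq : forall x y, p x = p y -> q x = q y.
  move=> x y e; apply: eq_gmulVg1; rewrite -(homV hq) -hq; apply: pq.
  by rewrite /kernel hp (homV hp) e gmulVl.
exists (q \o r); split; first by move=> a b; rewrite /= -hq; apply: pq_eq; rewrite hp !prK.
split=> [b | x]; last by apply: pq_eq; rewrite prK.
by have [x <-] := sq b; exists (p x); apply: pq_eq; rewrite prK.
Qed.

Lemma quotient_iso_sym (G H : group) (A : G -> Prop) (B : H -> Prop) :
  normal B -> quotient_iso A B -> quotient_iso B A.
Proof.
move=> nB [f [fh [fk fs]]].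
have f_cong : forall a b, cong B (f a) (f b) <-> cong A a b.
  move=> a b; rewrite -[cong A a b]fk; apply: (cong_memE nB).
  apply: (cong_sym nB); apply: (cong_trans nB (fh _ _)).
  exact: (congM nB (hom_modV nB fh a) (cong_refl nB _)).
pose g y := proj1_sig (cid (fs y)).
have fgK : forall y, cong B (f (g y)) y by move=> y; rewrite /g; case: cid.
exists g; split; last split.
- move=> x y; apply/f_cong; apply: (cong_trans nB (fgK _)).
  exact: (cong_sym nB (cong_trans nB (fh _ _) (congM nB (fgK x) (fgK y)))).
- by move=> y; rewrite -fk; exact: (cong_memE nB (fgK y)).
- by move=> x; exists (f x); apply/f_cong; exact: fgK.
Qed.

Section WeaklyParaKernels.
Variables (P Q : group) (I : finType) (s : I -> P) (c : nat).
Hypothesis gens : forall x, gen (fun y => exists a, y = s a) x.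

Lemma fingen_onto_ker_lcs (be : P -> Q) : is_hom be -> surj be ->
  quotient_iso (@lcs Q c) (@lcs P c) -> forall u, be u = gone -> lcs c u.
Proof.
move=> hbe sbe [f [fh [fk fs]]] u beu.
apply: (@hopfian_lcs P I s gens c (fun x => f (be x))).
- by move=> x y /=; rewrite hbe; exact: fh.
- by move=> y; have [z hz] := fs y; have [x ex] := sbe z; exists x; rewrite ex.
- by rewrite /= beu; apply/fk; exact: lcs1.
Qed.

Lemma onto_fingen_ker_lcs (be : Q -> P) : is_hom be -> surj be ->
  quotient_iso (@lcs P c) (@lcs Q c) -> forall u, be u = gone -> lcs c u.
Proof.
move=> hbe sbe [g [gh [gk gs]]] u beu.
have [x gxu] := gs u.
suff /gk hgx : lcs c x by exact: (cong_memE (lcs_normal c) gxu).1.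
apply: (@hopfian_lcs P I s gens c (fun x => be (g x))).
- by move=> y z /=; rewrite -hbe; exact: (hom_cong hbe (gh y z)).
- move=> y; have [z <-] := sbe y; have [w gw] := gs z.
  by exists w; exact: (hom_cong hbe gw).
- by apply/(cong1r (lcs_normal c)); rewrite -beu; exact: (hom_cong hbe gxu).
Qed.

End WeaklyParaKernels.

Theorem mainTheorem3 (Gam F G : group) (n : nat) (pK : F -> Gam) (pN : F -> G) :
  residually_nilpotent Gam -> finitely_generated Gam -> rank Gam n ->
  free_of_rank F n ->
  is_hom pK -> surj pK ->   (* Gam = F / K with K = kernel pK *)
  is_hom pN -> surj pN ->   (* G = F / N with N = kernel pN *)
  weakly_para G Gam ->
  ((exists phi : F -> F, is_iso phi /\
      (forall x, kernel pK x -> gimage phi (kernel pN) x)) ->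
     isomorphic G Gam) /\
  ((exists phi : F -> F, is_iso phi /\
      (forall x, gimage phi (kernel pN) x -> kernel pK x) /\
      (exists x, kernel pK x /\ ~ gimage phi (kernel pN) x)) ->
     ~ residually_nilpotent G /\ ~ para G Gam).
Proof.
move=> RN [m [s gens]] _ _ hK sK hN sN wp.
have qiso c : quotient_iso (@lcs G c) (@lcs Gam c) := wp c.+1 isT.
split.
- case=> phi [isophi KN]; have [psi [[hpsi _] [psiK _]]] := iso_inv isophi.
  have [|||pi [hpi [spi _]]] := hom_factor hK sK (q := pN \o psi).
  + by move=> x y; rewrite /= hpsi hN.
  + by move=> z; have [w <-] := sN z; exists (phi w); rewrite /= psiK.
  + by move=> x /KN [w [Nw <-]]; rewrite /kernel /= psiK.
  have pi_inj : inj pi.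
    apply: (hom_ker_inj hpi) => u piu; apply: RN => k _.
    exact: (fingen_onto_ker_lcs gens hpi spi (qiso k.-1) piu).
  by have [g [isog _]] := iso_inv (conj hpi (conj pi_inj spi)); exists g.
- case=> phi [[hphi [_ sphi]] [NK [x0 [Kx0 Nx0]]]].
  have [|||rho [hrho [srho rhoE]]] := hom_factor hN sN (q := pK \o phi).
  + by move=> x y; rewrite /= hphi hK.
  + by move=> g; have [u <-] := sK g; have [w <-] := sphi u; exists w.
  + by move=> x Nx; apply: NK; exists x.
  have [w0 phiw0] := sphi x0.
  have z0_ne1 : pN w0 <> gone by move=> Nw0; apply: Nx0; exists w0.
  have z0_lcs k : lcs k (pN w0).
    apply: (onto_fingen_ker_lcs gens hrho srho); last by rewrite rhoE /= phiw0.
    exact: (quotient_iso_sym (lcs_normal k) (qiso k)).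
  have notRN : ~ residually_nilpotent G.
    by move=> RNG; apply: z0_ne1; apply: RNG => k _; exact: z0_lcs.
  by split=> // [[_ /notRN]].
Qed.
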